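(* The dual norm of the dual space $\mathcal R^*$ of Read's space $\mathcal R=(c_0,|||\cdot|||)$ is $2/3$-rough, i.e. for every $x^*\in\mathcal R^*$, $$\limsup_{|||h|||\to 0}\frac{|||x^*+h|||+|||x^*-h|||-2|||x^*|||}{|||h|||}\ge \frac23,$$ where $|||\cdot|||$ on $\mathcal R^*$ denotes the dual norm. In particular, the norm of $\mathcal R^*$ is not Fréchet differentiable at any point.
   Context: Let $c_{00}(\mathbb Q)$ be the set of finitely supported sequences with rational coefficients, and let $(u_n)_{n\in\mathbb N}$ be a sequence in $c_{00}(\mathbb Q)$ which lists every element of $c_{00}(\mathbb Q)$ infinitely many times. Let $(a_n)_{n\in\mathbb N}$ be a strictly increasing sequence of positive integers with $a_n>\max\operatorname{supp} u_n$ and $a_n>\|u_n\|_1$ for every $n$. $(e_n)$ denotes the canonical unit vectors and $\langle x,y\rangle=\sum_n x_ny_n$. Read's norm on $c_0$ is $|||x||| = \|x\|_\infty + \sum_{n} 2^{-a_n^2}|\langle x, u_n - e_{a_n}\rangle|$, and Read's space is $\mathcal R=(c_0,|||\cdot|||)$ (real scalars). A norm on a Banach space $Z$ is $\varepsilon$-rough ($\varepsilon>0$) if $\limsup_{\|h\|\to0}\frac{\|z+h\|+\|z-h\|-2\|z\|}{\|h\|}\ge\varepsilon$ for every $z\in Z$. *)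

From Stdlib Require Import Reals QArith.
From Coquelicot Require Import Coquelicot.
Open Scope R_scope.

Definition is_c0 (x : nat -> R) : Prop := is_lim_seq x 0.

Definition is_rat (r : R) : Prop := exists q : Q, r = Q2R q.

Definition fin_supp (v : nat -> R) : Prop :=
  exists N : nat, forall k, (N <= k)%nat -> v k = 0.

Definition in_c00Q (v : nat -> R) : Prop := (forall k, is_rat (v k)) /\ fin_supp v.

Definition sup_norm (x : nat -> R) : R :=
  real (Lub_Rbar (fun r => exists k, r = Rabs (x k))).

(* <x, u_n - e_{a_n}>; since supp u_n ⊆ [0, a_n), the pairing <x,u_n> is the
   finite sum over k = 0..a_n *)
Definition read_pair (u : nat -> nat -> R) (a : nat -> nat) (x : nat -> R) (n : nat) : R :=
  sum_n (fun k => x k * u n k) (a n) - x (a n).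

Definition read_norm (u : nat -> nat -> R) (a : nat -> nat) (x : nat -> R) : R :=
  sup_norm x + Series (fun n => / 2 ^ (a n * a n) * Rabs (read_pair u a x n)).

Record ReadData (u : nat -> nat -> R) (a : nat -> nat) : Prop := {
  rd_u_c00 : forall n, in_c00Q (u n);
  rd_u_lists : forall v, in_c00Q v -> forall N : nat,
      exists n, (N <= n)%nat /\ forall k, u n k = v k;
  rd_a_pos : (0 < a 0)%nat;
  rd_a_incr : forall n, (a n < a (S n))%nat;
  rd_a_supp : forall n k, u n k <> 0 -> (k < a n)%nat;
  rd_a_l1 : forall n, sum_n (fun k => Rabs (u n k)) (a n) < INR (a n)
}.

(* Elements of R^*: linear functionals on c_0 bounded w.r.t. Read's norm
   (values outside c_0 are irrelevant). *)
Definition is_read_dual (u : nat -> nat -> R) (a : nat -> nat) (f : (nat -> R) -> R) : Prop :=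
  (forall x y, is_c0 x -> is_c0 y -> f (fun k => x k + y k) = f x + f y) /\
  (forall c x, is_c0 x -> f (fun k => c * x k) = c * f x) /\
  (exists C, forall x, is_c0 x -> Rabs (f x) <= C * read_norm u a x).

Definition read_dual_norm (u : nat -> nat -> R) (a : nat -> nat) (f : (nat -> R) -> R) : R :=
  real (Lub_Rbar (fun r => exists x, is_c0 x /\ read_norm u a x <= 1 /\ r = Rabs (f x))).

(* eps-roughness of the dual norm at f:
   limsup_{|||h|||->0} (|||f+h|||+|||f-h|||-2|||f|||)/|||h||| >= eps, unfolded. *)
Definition read_dual_rough_at (u : nat -> nat -> R) (a : nat -> nat) (eps : R)
    (f : (nat -> R) -> R) : Prop :=
  forall eta delta : R, 0 < eta -> 0 < delta ->
    exists h : (nat -> R) -> R, is_read_dual u a h /\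
      0 < read_dual_norm u a h < delta /\
      (read_dual_norm u a (fun x => f x + h x) + read_dual_norm u a (fun x => f x - h x)
        - 2 * read_dual_norm u a f) / read_dual_norm u a h >= eps - eta.

(* Read's norm is equivalent to the sup norm, ||x||_oo <= |||x||| <= 7/3 ||x||_oo, since the
   weights 2^(-a_n^2) beat the bound (a_n + 1) ||x||_oo on the pairings <x, u_n - e_(a_n)>.
   The n-th pairing only sees the coordinates up to a_n, so changing x by d at a single
   coordinate k > a_M raises |||x||| by at most 2^(1-M) |d| as long as ||x||_oo is kept.
   Given f, take x in the unit ball with f(x) close to |||f|||, and k so far out that x_k is
   almost 0. With c = ||x||_oo - |x_k|, the vectors x + c e_k and x - c e_k have the sup norm
   of x, so divided by |||x||| + 2^(1-M) c they lie in the unit ball. Testing f + t e_k^* on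
   the first and f - t e_k^* on the second gives
   |||f + t e_k^*||| + |||f - t e_k^*||| - 2 |||f||| >= 2 t c / |||x||| - o(t) >= (6/7 - o(1)) t,
   whereas 0 < |||t e_k^*||| <= t. *)

From Stdlib Require Import Reals QArith Lra Lia Classical FunctionalExtensionality.
From Coquelicot Require Import Coquelicot.
Open Scope R_scope.

Section RealLub.

Variables (E : R -> Prop) (r0 B : R).
Hypotheses (E_r0 : E r0) (E_le_B : forall r, E r -> r <= B).

Lemma is_lub_Rbar_real : is_lub_Rbar E (real (Lub_Rbar E)).
Proof.
  destruct (Lub_Rbar_correct E) as [Hub Hleast].
  destruct (Lub_Rbar E) as [l| |]; simpl.
  - split; assumption.
  - destruct (Hleast (Finite B) E_le_B).
  - destruct (Hub r0 E_r0).
Qed.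

Lemma Lub_Rbar_real_ub r : E r -> r <= real (Lub_Rbar E).
Proof. exact (proj1 is_lub_Rbar_real r). Qed.

Lemma Lub_Rbar_real_le : real (Lub_Rbar E) <= B.
Proof. exact (proj2 is_lub_Rbar_real (Finite B) E_le_B). Qed.

Lemma Lub_Rbar_real_approx eps :
  0 < eps -> exists r, E r /\ real (Lub_Rbar E) - eps < r.
Proof.
  intros Heps; apply not_all_not_ex; intros Hnone.
  assert (Hub : is_ub_Rbar E (real (Lub_Rbar E) - eps)).
  { intros r Er; simpl; apply Rnot_lt_le; intros Hlt; exact (Hnone r (conj Er Hlt)). }
  pose proof (proj2 is_lub_Rbar_real _ Hub); simpl in *; lra.
Qed.

End RealLub.

Lemma c0_bounded x : is_c0 x -> exists B, forall k, Rabs (x k) <= B.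
Proof. intros Hx; destruct (filterlim_bounded x (ex_intro _ 0 Hx)) as [B HB]; now exists B. Qed.

Lemma c0_plus x y : is_c0 x -> is_c0 y -> is_c0 (fun k => x k + y k).
Proof.
  intros Hx Hy; pose proof (is_lim_seq_plus' _ _ _ _ Hx Hy) as H.
  now rewrite Rplus_0_r in H.
Qed.

Lemma c0_scal c x : is_c0 x -> is_c0 (fun k => c * x k).
Proof.
  intros Hx; pose proof (is_lim_seq_scal_l x c 0 Hx) as H; simpl in H.
  now rewrite Rmult_0_r in H.
Qed.

Lemma sup_norm_ge x k : is_c0 x -> Rabs (x k) <= sup_norm x.
Proof.
  intros Hx; destruct (c0_bounded x Hx) as [B HB].
  apply (Lub_Rbar_real_ub _ (Rabs (x k)) B);
    [now exists k | intros r [j ->]; apply HB | now exists k].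
Qed.

Lemma sup_norm_le x B : (forall k, Rabs (x k) <= B) -> sup_norm x <= B.
Proof.
  intros HB; apply (Lub_Rbar_real_le _ (Rabs (x 0%nat)));
    [now exists 0%nat | intros r [j ->]; apply HB].
Qed.

Lemma sup_norm_ge0 x : is_c0 x -> 0 <= sup_norm x.
Proof. intros Hx; pose proof (sup_norm_ge x 0 Hx); pose proof (Rabs_pos (x 0%nat)); lra. Qed.

Lemma sup_norm_opp x : is_c0 x -> sup_norm (fun k => -1 * x k) = sup_norm x.
Proof.
  intros Hx; apply Rle_antisym; apply sup_norm_le; intros k.
  - rewrite Rabs_mult, Rabs_m1, Rmult_1_l; now apply sup_norm_ge.
  - rewrite <- (Rmult_1_l (Rabs (x k))), <- (Rabs_m1), <- Rabs_mult.
    now apply (sup_norm_ge (fun k => -1 * x k)), c0_scal.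
Qed.

Definition single (k : nat) (c : R) : nat -> R := fun j => if Nat.eqb j k then c else 0.

Lemma single_at k c : single k c k = c.
Proof. unfold single; now rewrite Nat.eqb_refl. Qed.

Lemma single_off k c j : j <> k -> single k c j = 0.
Proof. intros Hj; unfold single; apply Nat.eqb_neq in Hj; now rewrite Hj. Qed.

Lemma Rabs_single_le k c j : Rabs (single k c j) <= Rabs c.
Proof. unfold single; destruct (Nat.eqb j k); rewrite ?Rabs_R0; auto using Rle_refl, Rabs_pos. Qed.

Lemma single_scal k c : single k c = fun j => c * single k 1 j.
Proof. apply functional_extensionality; intros j; unfold single; destruct (Nat.eqb j k); ring. Qed.

Lemma c0_single k c : is_c0 (single k c).
Proof.
  apply is_lim_seq_ext_loc with (fun _ => 0); [|apply is_lim_seq_const].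
  exists (S k); intros n Hn; symmetry; apply single_off; lia.
Qed.

Lemma c0_small_beyond x N eps : is_c0 x -> 0 < eps -> exists k, (N < k)%nat /\ Rabs (x k) < eps.
Proof.
  intros Hx Heps; apply is_lim_seq_spec in Hx; destruct (Hx (mkposreal eps Heps)) as [K HK].
  exists (S (Nat.max K N)); split; [lia|].
  specialize (HK (S (Nat.max K N)) ltac:(lia)); simpl in HK; now rewrite Rminus_0_r in HK.
Qed.

Lemma Rabs_inv_lt_1 q : 1 < q -> Rabs (/ q) < 1.
Proof.
  intros Hq; rewrite Rabs_pos_eq by (apply Rlt_le, Rinv_0_lt_compat; lra).
  rewrite <- Rinv_1; apply Rinv_lt_contravar; lra.
Qed.

Lemma ex_series_geom_scal c q : Rabs q < 1 -> ex_series (fun n => c * q ^ n).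
Proof. intros Hq; apply (ex_series_scal_l c (fun n => q ^ n)), ex_series_geom, Hq. Qed.

Lemma half_pow_le m n : (m <= n)%nat -> (/ 2) ^ n <= (/ 2) ^ m.
Proof.
  intros Hmn; rewrite !pow_inv.
  apply Rinv_le_contravar; [apply pow_lt; lra | apply Rle_pow; [lra | exact Hmn]].
Qed.

Lemma exists_half_pow_le eps : 0 < eps -> exists M, 2 * (/ 2) ^ M <= eps.
Proof.
  intros Heps.
  destruct (pow_lt_1_zero (/ 2) (Rabs_inv_lt_1 2 ltac:(lra)) (eps / 2)) as [M HM]; [lra|].
  exists M; specialize (HM M (le_n M)); rewrite Rabs_pos_eq in HM by (apply pow_le; lra); lra.
Qed.

Section ReadNorm.

Variables (u : nat -> nat -> R) (a : nat -> nat).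
Hypothesis HR : ReadData u a.

Lemma a_gt n : (n < a n)%nat.
Proof. induction n; [exact (rd_a_pos _ _ HR) | pose proof (rd_a_incr _ _ HR n); lia]. Qed.

Lemma a_mono m n : (m <= n)%nat -> (a m <= a n)%nat.
Proof. induction 1; [lia | pose proof (rd_a_incr _ _ HR m0); lia]. Qed.

Lemma read_weight_le n : / 2 ^ (a n * a n) * (INR (a n) + 1) <= (/ 4) ^ n.
Proof.
  pose proof (a_gt n) as Hn; set (b := a n) in *.
  assert (Hb : (b + 1 <= 2 ^ b)%nat).
  { clear; induction b; [simpl; lia | rewrite Nat.pow_succ_r'; lia]. }
  assert (Hexp : (2 * n + b <= b * b)%nat) by (destruct n; nia).
  assert (Hnat : ((b + 1) * 4 ^ n <= 2 ^ (b * b))%nat).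
  { pose proof (Nat.pow_le_mono_r 2 _ _ ltac:(lia) Hexp) as H.
    rewrite Nat.pow_add_r, Nat.pow_mul_r in H; simpl (2 ^ 2)%nat in H; nia. }
  apply le_INR in Hnat; rewrite mult_INR, !pow_INR, plus_INR in Hnat; simpl INR in Hnat.
  replace (1 + 1 + 1 + 1) with 4 in Hnat by ring; replace (1 + 1) with 2 in Hnat by ring.
  assert (P2 : 0 < 2 ^ (b * b)) by (apply pow_lt; lra).
  assert (P4 : 0 < 4 ^ n) by (apply pow_lt; lra).
  rewrite pow_inv; apply (Rmult_le_reg_r (2 ^ (b * b) * 4 ^ n)); [nra|].
  field_simplify; lra.
Qed.

Lemma read_pair_plus x y n :
  read_pair u a (fun j => x j + y j) n = read_pair u a x n + read_pair u a y n.
Proof.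
  unfold read_pair; rewrite !sum_n_Reals.
  replace (sum_f_R0 (fun j => (x j + y j) * u n j) (a n))
    with (sum_f_R0 (fun j => x j * u n j) (a n) + sum_f_R0 (fun j => y j * u n j) (a n)).
  - ring.
  - rewrite <- sum_plus; apply sum_eq; intros; ring.
Qed.

Lemma read_pair_scal c x n : read_pair u a (fun j => c * x j) n = c * read_pair u a x n.
Proof.
  unfold read_pair; rewrite !sum_n_Reals, Rmult_minus_distr_l, scal_sum.
  f_equal; apply sum_eq; intros; ring.
Qed.

Lemma read_pair_local x y n :
  (forall j, (j <= a n)%nat -> x j = y j) -> read_pair u a x n = read_pair u a y n.
Proof.
  intros Hxy; unfold read_pair; rewrite (Hxy (a n)) by lia; f_equal.
  apply sum_n_ext_loc; intros j Hj; now rewrite Hxy.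
Qed.

Lemma read_pair_bound x B n :
  (forall j, Rabs (x j) <= B) -> Rabs (read_pair u a x n) <= B * (INR (a n) + 1).
Proof.
  intros HB; unfold read_pair; rewrite sum_n_Reals.
  pose proof (rd_a_l1 _ _ HR n) as Hl1; rewrite sum_n_Reals in Hl1.
  assert (HB0 : 0 <= B) by (pose proof (HB 0%nat); pose proof (Rabs_pos (x 0%nat)); lra).
  assert (Hsum : Rabs (sum_f_R0 (fun j => x j * u n j) (a n)) <= B * INR (a n)).
  { eapply Rle_trans; [apply sum_f_R0_triangle|].
    eapply Rle_trans; [apply sum_Rle with (Bn := fun j => Rabs (u n j) * B)|].
    - intros j _; rewrite Rabs_mult, Rmult_comm.
      apply Rmult_le_compat_l; [apply Rabs_pos | apply HB].
    - rewrite <- scal_sum; nra. }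
  eapply Rle_trans; [apply Rabs_triang|]; rewrite Rabs_Ropp; pose proof (HB (a n)); lra.
Qed.

Definition read_term x n := / 2 ^ (a n * a n) * Rabs (read_pair u a x n).

Lemma read_weight_pos n : 0 < / 2 ^ (a n * a n).
Proof. apply Rinv_0_lt_compat, pow_lt; lra. Qed.

Lemma read_term_ge0 x n : 0 <= read_term x n.
Proof. apply Rmult_le_pos; [apply Rlt_le, read_weight_pos | apply Rabs_pos]. Qed.

Lemma read_term_le x B n : (forall j, Rabs (x j) <= B) -> read_term x n <= B * (/ 4) ^ n.
Proof.
  intros HB; pose proof (read_pair_bound x B n HB); pose proof (read_weight_le n).
  pose proof (read_weight_pos n).
  assert (HB0 : 0 <= B) by (pose proof (HB 0%nat); pose proof (Rabs_pos (x 0%nat)); lra).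
  unfold read_term; nra.
Qed.

Lemma ex_series_read_term x B : (forall j, Rabs (x j) <= B) -> ex_series (read_term x).
Proof.
  intros HB; apply (@ex_series_le _ R_CompleteNormedModule _ (fun n => B * (/ 4) ^ n)).
  - intros n; change (Rabs (read_term x n) <= B * (/ 4) ^ n).
    rewrite Rabs_pos_eq by apply read_term_ge0; now apply read_term_le.
  - exact (ex_series_geom_scal B _ (Rabs_inv_lt_1 4 ltac:(lra))).
Qed.

Lemma Series_read_term_bounds x :
  is_c0 x -> 0 <= Series (read_term x) <= 4 / 3 * sup_norm x.
Proof.
  intros Hx; pose proof (sup_norm_ge x) as Hsup; split.
  - rewrite <- (Rmult_0_l (Series (fun n => (/ 4) ^ n))), <- Series_scal_l.
    apply Series_le; [intros n; rewrite Rmult_0_l; split; [lra | apply read_term_ge0]|].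
    apply (ex_series_read_term x (sup_norm x)); auto.
  - replace (4 / 3 * sup_norm x) with (Series (fun n => sup_norm x * (/ 4) ^ n)).
    + apply Series_le; [|exact (ex_series_geom_scal _ _ (Rabs_inv_lt_1 4 ltac:(lra)))].
      intros n; split; [apply read_term_ge0 | apply read_term_le; auto].
    + rewrite Series_scal_l, Series_geom by exact (Rabs_inv_lt_1 4 ltac:(lra)); field.
Qed.

Lemma read_norm_sup_bounds x :
  is_c0 x -> sup_norm x <= read_norm u a x <= 7 / 3 * sup_norm x.
Proof.
  intros Hx; pose proof (Series_read_term_bounds x Hx).
  unfold read_norm; fold (read_term x); lra.
Qed.

Lemma read_norm_ge0 x : is_c0 x -> 0 <= read_norm u a x.
Proof. intros Hx; pose proof (read_norm_sup_bounds x Hx); pose proof (sup_norm_ge0 x Hx); lra. Qed.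

Lemma read_norm_scal c x : is_c0 x -> read_norm u a (fun j => c * x j) <= Rabs c * read_norm u a x.
Proof.
  intros Hx; unfold read_norm; fold (read_term x) (read_term (fun j => c * x j)).
  assert (Hsup : sup_norm (fun j => c * x j) <= Rabs c * sup_norm x).
  { apply sup_norm_le; intros k; rewrite Rabs_mult.
    apply Rmult_le_compat_l; [apply Rabs_pos | now apply sup_norm_ge]. }
  rewrite (Series_ext _ (fun n => Rabs c * read_term x n)), Series_scal_l; [lra|].
  intros n; unfold read_term; rewrite read_pair_scal, Rabs_mult; ring.
Qed.

Lemma read_term_spike_le x k d M n :
  (a M < k)%nat ->
  read_term (fun j => x j + single k d j) n <= read_term x n + Rabs d * (/ 2) ^ M * (/ 2) ^ n.
Proof.
  intros HMk.
  assert (Hgeo : 0 <= Rabs d * (/ 2) ^ M * (/ 2) ^ n).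
  { repeat apply Rmult_le_pos; try apply pow_le; try lra; apply Rabs_pos. }
  destruct (Compare_dec.le_lt_dec k (a n)) as [Hkn | Hnk].
  - assert (HMn : (M <= n)%nat).
    { destruct (Compare_dec.le_lt_dec M n); [assumption|].
      pose proof (a_mono n M ltac:(lia)); lia. }
    assert (Hquarter : (/ 4) ^ n <= (/ 2) ^ M * (/ 2) ^ n).
    { replace (/ 4) with (/ 2 * / 2) by field; rewrite Rpow_mult_distr.
      apply Rmult_le_compat_r; [apply pow_le; lra | now apply half_pow_le]. }
    pose proof (read_pair_bound (single k d) (Rabs d) n (Rabs_single_le k d)) as Hd.
    pose proof (read_weight_le n); pose proof (read_weight_pos n); pose proof (Rabs_pos d).
    unfold read_term; rewrite read_pair_plus.
    pose proof (Rabs_triang (read_pair u a x n) (read_pair u a (single k d) n)).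
    nra.
  - unfold read_term; rewrite (read_pair_local _ x); [lra|].
    intros j Hj; rewrite single_off by lia; ring.
Qed.

Lemma read_norm_spike_le x k d M :
  is_c0 x -> (a M < k)%nat -> Rabs (x k + d) <= sup_norm x ->
  read_norm u a (fun j => x j + single k d j) <= read_norm u a x + Rabs d * (2 * (/ 2) ^ M).
Proof.
  intros Hx HMk Hk; unfold read_norm; fold (read_term x) (read_term (fun j => x j + single k d j)).
  assert (Hsup : sup_norm (fun j => x j + single k d j) <= sup_norm x).
  { apply sup_norm_le; intros j; destruct (Nat.eq_dec j k) as [->|Hjk].
    - now rewrite single_at.
    - rewrite single_off, Rplus_0_r by exact Hjk; now apply sup_norm_ge. }
  assert (Hgeo : ex_series (fun n => Rabs d * (/ 2) ^ M * (/ 2) ^ n)).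
  { apply ex_series_geom_scal, Rabs_inv_lt_1; lra. }
  assert (Hser : ex_series (read_term x)).
  { apply (ex_series_read_term x (sup_norm x)); intros; now apply sup_norm_ge. }
  assert (Hsum : Series (read_term (fun j => x j + single k d j))
                 <= Series (read_term x) + Rabs d * (2 * (/ 2) ^ M)).
  { eapply Rle_trans.
    - apply Series_le with (b := fun n => read_term x n + Rabs d * (/ 2) ^ M * (/ 2) ^ n).
      + intros n; split; [apply read_term_ge0 | now apply read_term_spike_le].
      + now apply (ex_series_plus (read_term x)).
    - rewrite Series_plus, Series_scal_l, Series_geom by (auto; apply Rabs_inv_lt_1; lra).
      apply Req_le; field. }
  lra.
Qed.

Definition ball_bound (g : (nat -> R) -> R) (B : R) :=
  forall w, is_c0 w -> read_norm u a w <= 1 -> Rabs (g w) <= B.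

Lemma single_in_ball k c : Rabs c <= 3 / 7 -> is_c0 (single k c) /\ read_norm u a (single k c) <= 1.
Proof.
  intros Hc; split; [apply c0_single|].
  pose proof (read_norm_sup_bounds _ (c0_single k c)).
  pose proof (sup_norm_le _ _ (Rabs_single_le k c)); lra.
Qed.

Section DualNorm.

Variables (g : (nat -> R) -> R) (B : R).
Hypothesis g_bound : ball_bound g B.

Let ball_values := fun r => exists w, is_c0 w /\ read_norm u a w <= 1 /\ r = Rabs (g w).

Let ball_values_inhabited : ball_values (Rabs (g (single 0 (1 / 3)))).
Proof.
  destruct (single_in_ball 0 (1 / 3)) as [H1 H2]; [rewrite Rabs_pos_eq; lra|].
  now exists (single 0 (1 / 3)).
Qed.

Let ball_values_le : forall r, ball_values r -> r <= B.
Proof. intros r [w [Hw [Hwn ->]]]; now apply g_bound. Qed.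

Lemma read_dual_norm_ge w :
  is_c0 w -> read_norm u a w <= 1 -> Rabs (g w) <= read_dual_norm u a g.
Proof.
  intros Hw Hwn; apply (Lub_Rbar_real_ub _ _ B ball_values_inhabited ball_values_le).
  now exists w.
Qed.

Lemma read_dual_norm_le : read_dual_norm u a g <= B.
Proof. exact (Lub_Rbar_real_le _ _ B ball_values_inhabited ball_values_le). Qed.

Lemma read_dual_norm_ge0 : 0 <= read_dual_norm u a g.
Proof.
  destruct (single_in_ball 0 0) as [H1 H2]; [rewrite Rabs_R0; lra|].
  pose proof (read_dual_norm_ge _ H1 H2); pose proof (Rabs_pos (g (single 0 0))); lra.
Qed.

Lemma read_dual_norm_approx eps : 0 < eps ->
  exists w, is_c0 w /\ read_norm u a w <= 1 /\ read_dual_norm u a g - eps < Rabs (g w).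
Proof.
  intros Heps.
  destruct (Lub_Rbar_real_approx _ _ B ball_values_inhabited ball_values_le eps Heps)
    as [r [[w [Hw [Hwn ->]]] Hr]].
  now exists w.
Qed.

End DualNorm.

Lemma read_dual_ball_bound f : is_read_dual u a f -> exists B, ball_bound f B.
Proof.
  intros [_ [_ [C HC]]]; exists (Rabs C); intros w Hw Hwn.
  pose proof (HC w Hw); pose proof (read_norm_ge0 w Hw); pose proof (Rle_abs C).
  pose proof (Rabs_pos C); nra.
Qed.

Lemma ball_bound_coord c k : ball_bound (fun z => c * z k) (Rabs c).
Proof.
  intros w Hw Hwn; pose proof (sup_norm_ge w k Hw); pose proof (read_norm_sup_bounds w Hw).
  rewrite Rabs_mult; pose proof (Rabs_pos c); nra.
Qed.

Lemma ball_bound_plus g h B C :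
  ball_bound g B -> ball_bound h C -> ball_bound (fun z => g z + h z) (B + C).
Proof.
  intros Hg Hh w Hw Hwn; eapply Rle_trans; [apply Rabs_triang|].
  apply Rplus_le_compat; auto.
Qed.

Lemma ball_bound_minus g h B C :
  ball_bound g B -> ball_bound h C -> ball_bound (fun z => g z - h z) (B + C).
Proof.
  intros Hg Hh w Hw Hwn; eapply Rle_trans; [apply Rabs_triang|].
  rewrite Rabs_Ropp; apply Rplus_le_compat; auto.
Qed.

Lemma coord_is_read_dual c k : is_read_dual u a (fun z => c * z k).
Proof.
  split; [intros; ring | split; [intros; ring|]].
  exists (Rabs c); intros w Hw.
  pose proof (sup_norm_ge w k Hw); pose proof (read_norm_sup_bounds w Hw).
  rewrite Rabs_mult; pose proof (Rabs_pos c); nra.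
Qed.

Lemma read_dual_norm_coord t k : 0 < t -> t / 3 <= read_dual_norm u a (fun z => t * z k) <= t.
Proof.
  intros Ht; split.
  - destruct (single_in_ball k (1 / 3)) as [H1 H2]; [rewrite Rabs_pos_eq; lra|].
    pose proof (read_dual_norm_ge _ _ (ball_bound_coord t k) _ H1 H2) as H.
    cbv beta in H; rewrite single_at, Rabs_pos_eq in H by lra; lra.
  - pose proof (read_dual_norm_le _ _ (ball_bound_coord t k)) as H.
    now rewrite Rabs_pos_eq in H by lra.
Qed.

Lemma exists_nonzero_approx f eps : is_read_dual u a f -> 0 < eps ->
  exists w, is_c0 w /\ read_norm u a w <= 1 /\ 0 < sup_norm w /\
    read_dual_norm u a f - eps <= Rabs (f w).
Proof.
  intros Hf Heps; destruct (read_dual_ball_bound f Hf) as [B HB].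
  destruct (read_dual_norm_approx f B HB eps Heps) as [w [Hw [Hwn Happrox]]].
  destruct (Rlt_dec 0 (sup_norm w)) as [Hpos | Hzero]; [exists w; auto with real|].
  assert (Hfw : Rabs (f w) <= 0).
  { destruct Hf as [_ [_ [C HC]]]; pose proof (HC w Hw).
    pose proof (read_norm_sup_bounds w Hw); pose proof (sup_norm_ge0 w Hw).
    replace (read_norm u a w) with 0 in * by lra; lra. }
  destruct (single_in_ball 0 (1 / 3)) as [H1 H2]; [rewrite Rabs_pos_eq; lra|].
  exists (single 0 (1 / 3)); repeat split; auto.
  - pose proof (sup_norm_ge _ 0 H1) as H; rewrite single_at, Rabs_pos_eq in H; lra.
  - pose proof (Rabs_pos (f (single 0 (1 / 3)))); lra.
Qed.

Lemma exists_norming_vector f eps : is_read_dual u a f -> 0 < eps ->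
  exists x, is_c0 x /\ read_norm u a x <= 1 /\ 0 < sup_norm x /\
    0 <= f x /\ read_dual_norm u a f - eps <= f x.
Proof.
  intros Hf Heps; destruct (exists_nonzero_approx f eps Hf Heps) as [w [Hw [Hwn [Hsup Happrox]]]].
  destruct (Rle_dec 0 (f w)) as [Hfw | Hfw].
  - exists w; rewrite Rabs_pos_eq in Happrox; auto.
  - assert (Hopp : f (fun j => -1 * w j) = Rabs (f w)).
    { destruct Hf as [_ [Hhom _]]; rewrite Hhom, Rabs_left by (auto; lra); ring. }
    exists (fun j => -1 * w j); rewrite sup_norm_opp, Hopp by exact Hw.
    repeat split; auto using c0_scal, Rabs_pos.
    pose proof (read_norm_scal (-1) w Hw); rewrite Rabs_m1 in *; lra.
Qed.

Lemma read_dual_norm_spike_sum_ge f t x k c M lam :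
  is_read_dual u a f -> is_c0 x -> (a M < k)%nat -> 0 <= c -> c + Rabs (x k) <= sup_norm x ->
  0 <= lam -> lam * (read_norm u a x + c * (2 * (/ 2) ^ M)) <= 1 ->
  2 * lam * (f x + t * c) <=
    read_dual_norm u a (fun z => f z + t * z k) + read_dual_norm u a (fun z => f z - t * z k).
Proof.
  intros Hf Hx HMk Hc Hck Hlam Hnorm.
  destruct (read_dual_ball_bound f Hf) as [B HB]; destruct Hf as [Hadd [Hhom _]].
  set (spike d := fun j => lam * (x j + single k d j)).
  assert (Hball : forall d, Rabs d = c -> is_c0 (spike d) /\ read_norm u a (spike d) <= 1).
  { intros d Hd; assert (Hy : is_c0 (fun j => x j + single k d j)) by auto using c0_plus, c0_single.
    split; [now apply c0_scal|].
    assert (Hxkd : Rabs (x k + d) <= sup_norm x) by (pose proof (Rabs_triang (x k) d); lra).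
    pose proof (read_norm_spike_le x k d M Hx HMk Hxkd).
    pose proof (read_norm_scal lam _ Hy); rewrite Rabs_pos_eq, Hd in * by exact Hlam.
    unfold spike; nra. }
  assert (Hval : forall d, f (spike d) = lam * (f x + d * f (single k 1))).
  { intros d; unfold spike; rewrite Hhom, Hadd by auto using c0_plus, c0_single.
    now rewrite (single_scal k d), Hhom by apply c0_single. }
  assert (Hcoord : forall d, spike d k = lam * (x k + d)).
  { intros; unfold spike; now rewrite single_at. }
  destruct (Hball c) as [Hp Hpn]; [now rewrite Rabs_pos_eq|].
  destruct (Hball (- c)) as [Hq Hqn]; [now rewrite Rabs_Ropp, Rabs_pos_eq|].
  pose proof (ball_bound_plus _ _ _ _ HB (ball_bound_coord t k)) as HBp.
  pose proof (ball_bound_minus _ _ _ _ HB (ball_bound_coord t k)) as HBm.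
  pose proof (read_dual_norm_ge _ _ HBp _ Hp Hpn) as Np.
  pose proof (read_dual_norm_ge _ _ HBm _ Hq Hqn) as Nm.
  cbv beta in Np, Nm; rewrite Hval, Hcoord in Np, Nm.
  pose proof (Rle_abs (lam * (f x + c * f (single k 1)) + t * (lam * (x k + c)))).
  pose proof (Rle_abs (lam * (f x + - c * f (single k 1)) - t * (lam * (x k + - c)))).
  lra.
Qed.

Lemma spike_gain_arith t e Nf fx s m c T :
  0 < t <= 1 -> 0 < e <= 1 / 2 -> 0 <= Nf -> 0 <= fx -> Nf - t * e / 8 <= fx ->
  m <= s <= 1 -> s <= 7 / 3 * m -> 0 < m -> m * (1 - e / 8) <= c <= m ->
  0 < T -> T * (Nf + 1) * 8 <= t * e ->
  t * (2 / 3 - e) <= 2 * / (s + c * T) * (fx + t * c) - 2 * Nf.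
Proof.
  intros Ht He HNf Hfx0 Hfx Hs Hsm Hm Hc HT HTe.
  assert (Hc0 : 0 < c) by nra.
  assert (Hden : 0 < s + c * T) by nra.
  set (lam := / (s + c * T)).
  assert (Hlam : lam * (s + c * T) = 1) by (unfold lam; field; lra).
  assert (Hlam0 : 0 < lam) by (apply Rinv_0_lt_compat; lra).
  assert (HT8 : T <= e / 8) by nra.
  assert (Hlam1 : 1 - c * T <= lam).
  { assert (1 <= lam * (1 + c * T)) by nra.
    assert (0 < c * T) by nra.
    destruct (Rle_or_lt (1 - c * T) lam) as [|Hlt]; [assumption|].
    assert (lam * (1 + c * T) < (1 - c * T) * (1 + c * T)) by (apply Rmult_lt_compat_r; lra).
    nra. }
  assert (Hf : Nf - t * e / 4 <= lam * fx).
  { assert (HcT : c * T <= T) by nra.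
    assert (Nf * (c * T) <= t * e / 8) by nra.
    assert ((1 - c * T) * fx <= lam * fx) by nra.
    assert ((1 - c * T) * (Nf - t * e / 8) <= (1 - c * T) * fx) by nra.
    nra. }
  assert (Hlc : 1 / 3 * (1 - e / 4) <= lam * c).
  { assert (Hcs : lam * c * (s + c * T) = c).
    { transitivity (c * (lam * (s + c * T))); [ring | rewrite Hlam; ring]. }
    assert (s + c * T <= s * (1 + T)) by nra.
    assert (c <= lam * c * (s * (1 + T))) by nra.
    assert (s * (3 / 7) * (1 - e / 8) <= c) by nra.
    assert ((3 / 7) * (1 - e / 8) <= lam * c * (1 + T)) by nra.
    nra. }
  nra.
Qed.

Lemma exists_spike_direction f t e : is_read_dual u a f -> 0 < t <= 1 -> 0 < e <= 1 / 2 ->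
  exists k, t * (2 / 3 - e) <= read_dual_norm u a (fun z => f z + t * z k)
            + read_dual_norm u a (fun z => f z - t * z k) - 2 * read_dual_norm u a f.
Proof.
  intros Hf Ht He.
  destruct (read_dual_ball_bound f Hf) as [B HB]; pose proof (read_dual_norm_ge0 f B HB) as HNf.
  set (Nf := read_dual_norm u a f) in *.
  destruct (exists_norming_vector f (t * e / 8) Hf) as [x [Hx [Hxn [Hm [Hfx0 Hfx]]]]]; [nra|].
  pose proof (read_norm_sup_bounds x Hx).
  destruct (exists_half_pow_le (t * e / (8 * (Nf + 1)))) as [M HM].
  { apply Rdiv_lt_0_compat; nra. }
  destruct (c0_small_beyond x (a M) (sup_norm x * e / 8) Hx) as [k [Hk Hxk]]; [nra|].
  exists k.
  set (c := sup_norm x - Rabs (x k)); set (T := 2 * (/ 2) ^ M) in *.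
  assert (HT : 0 < T) by (unfold T; pose proof (pow_lt (/ 2) M ltac:(lra)); lra).
  assert (HTe : T * (Nf + 1) * 8 <= t * e).
  { apply (Rmult_le_compat_r (8 * (Nf + 1))) in HM; [|lra].
    replace (t * e / (8 * (Nf + 1)) * (8 * (Nf + 1))) with (t * e) in HM by (field; lra); lra. }
  pose proof (Rabs_pos (x k)).
  assert (Hc : sup_norm x * (1 - e / 8) <= c <= sup_norm x) by (unfold c; nra).
  assert (Hc0 : 0 <= c) by nra.
  assert (Hden : 0 < read_norm u a x + c * T).
  { assert (0 <= c * T) by (apply Rmult_le_pos; lra). lra. }
  pose proof (read_dual_norm_spike_sum_ge f t x k c M (/ (read_norm u a x + c * T)) Hf Hx Hk)
    as Hsum.
  pose proof (spike_gain_arith t e Nf (f x) (read_norm u a x) (sup_norm x) c T) as Harith.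
  assert (Hlam : / (read_norm u a x + c * T) * (read_norm u a x + c * T) <= 1).
  { rewrite Rinv_l by lra; lra. }
  specialize (Hsum Hc0 ltac:(unfold c; lra) (Rlt_le _ _ (Rinv_0_lt_compat _ Hden)) Hlam).
  specialize (Harith Ht He HNf Hfx0 Hfx ltac:(lra) ltac:(lra) Hm Hc HT HTe).
  lra.
Qed.

End ReadNorm.

Theorem theorem2p6 (u : nat -> nat -> R) (a : nat -> nat) (HR : ReadData u a) :
  forall f : (nat -> R) -> R, is_read_dual u a f -> read_dual_rough_at u a (2 / 3) f.
Proof.
  intros f Hf eta delta Heta Hdelta.
  set (e := Rmin eta (1 / 2)); set (t := Rmin (delta / 2) 1).
  assert (He : 0 < e <= 1 / 2 /\ e <= eta).
  { unfold e; repeat split; [apply Rmin_glb_lt; lra | apply Rmin_r | apply Rmin_l]. }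
  assert (Ht : 0 < t <= 1 /\ t < delta).
  { unfold t; repeat split; [apply Rmin_glb_lt; lra | apply Rmin_r|].
    pose proof (Rmin_l (delta / 2) 1); lra. }
  destruct (exists_spike_direction u a HR f t e Hf ltac:(lra) ltac:(lra)) as [k Hk].
  exists (fun z => t * z k); cbv beta.
  pose proof (read_dual_norm_coord u a HR t k ltac:(lra)) as Hh.
  set (Nh := read_dual_norm u a (fun z => t * z k)) in *.
  assert (HNh : Nh > 0) by lra.
  split; [exact (coord_is_read_dual u a HR t k) | split; [split; lra|]].
  apply Rle_ge, (Rle_div_r _ _ _ HNh); nra.
Qed.
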